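(* Let $d\ge2$, let $A$ be a symmetric positive definite real $d\times d$ matrix and $G$ an arbitrary real $d\times d$ matrix. Then there exists a real symmetric $d\times d$ matrix $S$ with $SG+G^TS=2SAS$ and $\mathrm{trace}(G-AS)=0$. *)

From mathcomp Require Import all_boot all_order all_algebra.
From mathcomp Require Import reals.
Set Implicit Arguments. Unset Strict Implicit. Unset Printing Implicit Defensive.
Import GRing.Theory Num.Theory.
Local Open Scope ring_scope.

Definition posdefmx (R : realType) (n : nat) (M : 'M[R]_n) : Prop :=
  M \is symmetricmx /\ forall x : 'cV[R]_n, x != 0 -> 0 < (x^T *m M *m x) ord0 ord0.

(* If the Lyapunov operator X |-> H X + X H^T is invertible, the equation
   H P + P H^T = 2 A has a unique, hence symmetric, solution P, and P is
   invertible because A is positive definite; S = P^-1 then satisfies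
   S H + H^T S = 2 S A S and tr (A S) = tr H.  This operator is invertible for
   H = G + e I for all but finitely many e, so there are solutions S_e for
   arbitrarily small e > 0.  They are bounded uniformly in e: the (j, j) entry
   of the equation reads <s, A s> = <s, h> for the j-th columns s of S_e and h
   of H, and coercivity of A gives |s| <= b |h|.  A convergent subsequence as
   e -> 0 yields the required S, all conditions being closed. *)

From mathcomp Require Import all_boot all_order all_algebra.
From mathcomp Require Import reals.
From mathcomp Require Import ring lra.
From mathcomp Require Import boolp classical_sets topology normedtype sequences.
Set Implicit Arguments. Unset Strict Implicit. Unset Printing Implicit Defensive.
Import Order.TTheory GRing.Theory Num.Theory.
Import numFieldNormedType.Exports.
Local Open Scope classical_set_scope.
Local Open Scope ring_scope.

Lemma symmetricmxP (F : fieldType) n (M : 'M[F]_n) :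
  reflect (M^T = M) (M \is symmetricmx).
Proof.
rewrite is_hermitianmxE expr0 scale1r map_mx_id //.
by apply: (iffP eqP) => [{2}->|->].
Qed.

Section Lyapunov.
Variables (F : fieldType) (n : nat).
Implicit Types H P C : 'M[F]_n.

Definition lyapmx H : 'M[F]_(n * n) := lin_mulmx H + lin_mulmxr H^T.

Lemma mul_lyapmx H P : mxvec P *m lyapmx H = mxvec (H *m P + P *m H^T).
Proof. by rewrite mulmxDr !mul_vec_lin linearD. Qed.

Lemma lyapmx_add_scalar H (e : F) : lyapmx (H + e%:M) = lyapmx H + (e *+ 2)%:M.
Proof.
apply/row_matrixP => i; rewrite !rowE; move: (delta_mx 0 i) => u.
rewrite -[u]vec_mxK mul_lyapmx mulmxDr mul_lyapmx mul_mx_scalar -linearZ -linearD.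
congr mxvec; rewrite linearD /= tr_scalar_mx mulmxDl mulmxDr.
by rewrite mul_scalar_mx mul_mx_scalar mulr2n scalerDl addrACA.
Qed.

Lemma lyapunov_sym_solution H C : lyapmx H \in unitmx -> C^T = C ->
  exists2 P, P^T = P & H *m P + P *m H^T = C.
Proof.
move=> Lu symC; pose P := vec_mx (mxvec C *m invmx (lyapmx H)).
have solP : H *m P + P *m H^T = C.
  by apply: (can_inj mxvecK); rewrite -mul_lyapmx vec_mxK mulmxKV.
(* P^T solves the same equation, and the solution is unique. *)
exists P => //; apply: (can_inj mxvecK); apply: (can_inj (mulmxK Lu)).
rewrite !mul_lyapmx solP -[in RHS]symC -solP [in RHS]raddfD /=.
by rewrite !trmx_mul !trmxK addrC.
Qed.

End Lyapunov.

Lemma riccati_invmx (F : numFieldType) n (A H P : 'M[F]_n) :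
  P \in unitmx -> H *m P + P *m H^T = 2%:R *: A ->
  invmx P *m H + H^T *m invmx P = 2%:R *: (invmx P *m A *m invmx P).
Proof.
move=> Pu lyapP; rewrite scalemxAl scalemxAr -lyapP mulmxDr mulmxDl !mulmxA mulVmx //.
by rewrite mul1mx -!mulmxA mulmxV // mulmx1.
Qed.

Lemma mxtrace_riccati_invmx (F : numFieldType) n (A H P : 'M[F]_n) :
  P \in unitmx -> H *m P + P *m H^T = 2%:R *: A ->
  \tr (A *m invmx P) = \tr H.
Proof.
move=> Pu lyapP; have := congr1 (fun M => \tr (invmx P *m M)) lyapP.
rewrite /= mulmxDr mxtraceD mxtrace_mulC -mulmxA mulmxV // mulmx1.
rewrite mulmxA mulVmx // mul1mx mxtrace_tr -scalemxAr mxtraceZ mxtrace_mulC.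
rewrite -mulr2n -[_ *+ 2]mulr_natl => /mulfI -> //; by rewrite pnatr_eq0.
Qed.

Lemma unitmx_add_scalar_small (F : numFieldType) n (N : 'M[F]_n) (delta : F) :
  0 < delta -> exists2 e, 0 < e <= delta & N + e%:M \in unitmx.
Proof.
move=> delta_gt0; set p := char_poly (- N).
have p_neq0 : p != 0 by rewrite monic_neq0 // char_poly_monic.
pose s := [seq delta / k.+1%:R | k <- iota 0 (size p)].
have s_uniq : uniq s.
  rewrite map_inj_uniq ?iota_uniq // => k l /(mulfI (lt0r_neq0 delta_gt0)).
  by move/invr_inj/eqP; rewrite eqr_nat eqSS => /eqP.
have : ~~ all (root p) s.
  apply/negP => /(max_poly_roots p_neq0)/(_ s_uniq).
  by rewrite size_map size_iota ltnn.
case/allPn => _ /mapP[k _ ->]; rewrite -eigenvalue_root_char => not_eigen.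
exists (delta / k.+1%:R).
  rewrite divr_gt0 ?ltr0Sn //= ler_pdivrMr ?ltr0Sn //.
  by rewrite ler_peMr ?(ltW delta_gt0) // ler1n.
apply: contraR not_eigen; rewrite unitmxE unitfE negbK => /det0P[v v_neq0 vNe].
apply/eigenvalueP; exists v => //.
by apply/eqP; rewrite mulmxN eq_sym -subr_eq0 opprK -mul_mx_scalar -mulmxDr addrC vNe.
Qed.

Lemma sqr_le_sum_sqr (R : realDomainType) (I : finType) (f : I -> R) i :
  f i ^+ 2 <= \sum_k f k ^+ 2.
Proof. by rewrite (bigD1 i) //= lerDl sumr_ge0 // => k _; rewrite sqr_ge0. Qed.

Section PositiveDefinite.
Variables (R : realType) (n : nat).
Implicit Types (A B C G H M P S : 'M[R]_n) (u v : 'cV[R]_n).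

Definition qform M u v : R := (u^T *m M *m v) 0 0.

Lemma qformC M u v : M^T = M -> qform M u v = qform M v u.
Proof.
move=> symM; rewrite /qform -[u^T *m M *m v]trmxK [in LHS]mxE.
by rewrite !trmx_mul trmxK symM mulmxA.
Qed.

Lemma qform0r M u : qform M u 0 = 0.
Proof. by rewrite /qform mulmx0 mxE. Qed.

Lemma qform1 u v : qform 1%:M u v = \sum_i u i 0 * v i 0.
Proof. by rewrite /qform mulmx1 mxE; apply: eq_bigr => i _; rewrite mxE. Qed.

Lemma qformBZ M u v (t : R) : qform M (u - t *: v) (u - t *: v) =
  qform M u u - t * qform M u v - t * qform M v u + t ^+ 2 * qform M v v.
Proof.
rewrite /qform; have -> : (u - t *: v)^T = u^T - t *: v^T by rewrite linearB linearZ.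
rewrite !(mulmxBl, mulmxBr) -!scalemxAl -!scalemxAr -?scalemxAl.
by rewrite !mxE; ring.
Qed.

Lemma posdefmx_ge0 A v : posdefmx A -> 0 <= qform A v v.
Proof.
by case=> _ posA; have [->|/posA/ltW//] := eqVneq v 0; rewrite qform0r.
Qed.

Lemma qform_cauchy_schwarz A u v : posdefmx A ->
  qform A u v ^+ 2 <= qform A u u * qform A v v.
Proof.
move=> posA; have [/symmetricmxP symA posA'] := posA.
have [->|v_neq0] := eqVneq v 0; first by rewrite !qform0r expr0n mulr0.
have := posdefmx_ge0 (u - (qform A u v / qform A v v) *: v) posA.
rewrite qformBZ (qformC _ u symA).
have : 0 < qform A v v := posA' _ v_neq0.
set a := qform A v v; set b := qform A u u; set c := qform A u v => a_gt0 ge0.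
rewrite -subr_ge0; congr (0 <= _): (mulr_ge0 (ltW a_gt0) ge0).
by field; rewrite lt0r_neq0.
Qed.

Lemma qformE M u v : qform M u v = \sum_i \sum_j u i 0 * M i j * v j 0.
Proof.
rewrite /qform mxE; under eq_bigr => j _ do rewrite !mxE big_distrl /=.
rewrite exchange_big; apply: eq_bigr => i _; apply: eq_bigr => j _.
by rewrite !mxE.
Qed.

Lemma qform_le_sum_abs M v :
  qform M v v <= (\sum_i \sum_j `|M i j|) * \sum_k v k 0 ^+ 2.
Proof.
rewrite qformE mulr_suml; apply: ler_sum => i _.
rewrite mulr_suml; apply: ler_sum => j _.
have abs_vij : `|v i 0| * `|v j 0| <= \sum_k v k 0 ^+ 2.
  have := sqr_le_sum_sqr (fun k => v k 0) i; have := sqr_le_sum_sqr (fun k => v k 0) j.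
  rewrite -[v i 0 ^+ 2]real_normK ?num_real // -[v j 0 ^+ 2]real_normK ?num_real //.
  by have := normr_ge0 (v i 0); have := normr_ge0 (v j 0); nra.
apply: le_trans (ler_norm _) _; rewrite !normrM mulrAC mulrC.
by rewrite ler_wpM2l.
Qed.

Lemma posdefmx_unitmx A : posdefmx A -> A \in unitmx.
Proof.
case=> _ posA; rewrite unitmxE unitfE; apply/negP => /det0P[v v_neq0 vA].
have := posA v^T; rewrite trmx_eq0 v_neq0 trmxK vA mul0mx mxE => /(_ isT).
by rewrite ltxx.
Qed.

Lemma posdefmx_coercive A : posdefmx A ->
  exists b : R, forall v, \sum_i v i 0 ^+ 2 <= b * qform A v v.
Proof.
(* |v|^2 = <v, A (A^-1 v)>; Cauchy-Schwarz for the A-form, then a crude bound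
   on the A^-1-form, give |v|^4 <= <v, A v> * c |v|^2. *)
move=> posA; have [/symmetricmxP symA _] := posA; have Au := posdefmx_unitmx posA.
set B := invmx A; exists (\sum_i \sum_j `|B i j|) => v.
set s := \sum_i v i 0 ^+ 2; set c := \sum_i \sum_j _.
have s_ge0 : 0 <= s by rewrite sumr_ge0 // => i _; rewrite sqr_ge0.
have c_ge0 : 0 <= c by rewrite sumr_ge0 // => i _; rewrite sumr_ge0.
have qAvBv : qform A v (B *m v) = s.
  rewrite /s; under eq_bigr do rewrite expr2.
  by rewrite -qform1 /qform mulmx1 mulmxA -[_ *m A *m B]mulmxA mulmxV // mulmx1.
have qABv : qform A (B *m v) (B *m v) = qform B v v.
  rewrite /qform trmx_mul trmx_inv symA -!mulmxA [A *m (B *m _)]mulmxA mulmxV //.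
  by rewrite mul1mx mulmxA.
have := qform_cauchy_schwarz v (B *m v) posA; rewrite qAvBv qABv.
move/le_trans/(_ (ler_wpM2l (posdefmx_ge0 v posA) (qform_le_sum_abs B v))).
rewrite -/c -/s.
have [->|s_neq0] := eqVneq s 0; first by rewrite mulr_ge0 ?posdefmx_ge0.
have s_gt0 : 0 < s by rewrite lt0r s_neq0.
by rewrite mulrA expr2 ler_pM2r // mulrC.
Qed.

Lemma posdefmxZ A (c : R) : 0 < c -> posdefmx A -> posdefmx (c *: A).
Proof.
move=> c_gt0 [/symmetricmxP symA posA]; split.
  by apply/symmetricmxP; rewrite linearZ /= symA.
by move=> v /posA; rewrite -scalemxAr -scalemxAl [in X in _ -> X]mxE; apply: mulr_gt0.
Qed.

Lemma lyapunov_posdef_unitmx C H P : posdefmx C -> P^T = P ->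
  H *m P + P *m H^T = C -> P \in unitmx.
Proof.
case=> _ posC symP lyapP; rewrite unitmxE unitfE; apply/negP => /det0P[v v_neq0 vP].
have Pv : P *m v^T = 0 by rewrite -symP -trmx_mul vP trmx0.
have := posC v^T; rewrite trmx_eq0 v_neq0 trmxK -lyapP => /(_ isT).
rewrite mulmxDr mulmxDl !mulmxA vP !mul0mx -!mulmxA Pv !mulmx0 addr0 mxE.
by rewrite ltxx.
Qed.

Definition riccati_solution A H S : Prop :=
  [/\ S^T = S, S *m H + H^T *m S = 2%:R *: (S *m A *m S) & \tr (A *m S) = \tr H].

Lemma riccati_col_sqr_le A H S (b : R) :
  (forall v, \sum_i v i 0 ^+ 2 <= b * qform A v v) -> S^T = S ->
  S *m H + H^T *m S = 2%:R *: (S *m A *m S) ->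
  forall j, \sum_i S i j ^+ 2 <= b ^+ 2 * \sum_i H i j ^+ 2.
Proof.
move=> coerA symS ricS j; set t := \sum_k S k j * H k j.
have qAS : qform A (col j S) (col j S) = t.
  have SHjj : (S *m H) j j = t.
    by rewrite mxE; apply: eq_bigr => k _; rewrite -{1}symS mxE.
  have HSjj : (H^T *m S) j j = t.
    by rewrite mxE; apply: eq_bigr => k _; rewrite mxE mulrC.
  have := congr1 (fun M => M j j) ricS; rewrite /= mxE SHjj HSjj mxE -mulr2n.
  rewrite -[_ *+ 2]mulr_natl => /mulfI -> //; last by rewrite pnatr_eq0.
  rewrite /qform tr_col symS -row_mul !mxE; apply: eq_bigr => k _.
  by rewrite !mxE.
have := coerA (col j S); rewrite qAS; under eq_bigr do rewrite mxE.
have : 2%:R * (b * t) <= \sum_k S k j ^+ 2 + b ^+ 2 * \sum_k H k j ^+ 2.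
  rewrite /t !mulr_sumr -big_split /=; apply: ler_sum => k _.
  by have := sqr_ge0 (S k j - b * H k j); nra.
by nra.
Qed.

Lemma sum_sqr_col_add_scalar_le G (e : R) j :
  0 <= e <= 1 -> \sum_i (G + e%:M) i j ^+ 2 <= \sum_i (`|G i j| + 1) ^+ 2.
Proof.
move=> /andP[e_ge0 e_le1]; apply: ler_sum => i _; rewrite !mxE.
have le_abs : `|G i j + e *+ (i == j)| <= `|G i j| + 1.
  apply: le_trans (ler_normD _ _) _; rewrite lerD2l.
  by case: (i == j); rewrite ?mulr1n ?mulr0n ?normr0 // ger0_norm.
rewrite -real_normK ?num_real //.
by have := normr_ge0 (G i j + e *+ (i == j)); nra.
Qed.

Lemma riccati_entry_sqr_le A G S (b e : R) i j :
  (forall v, \sum_k v k 0 ^+ 2 <= b * qform A v v) -> 0 <= e <= 1 ->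
  riccati_solution A (G + e%:M) S -> S i j ^+ 2 <= b ^+ 2 * \sum_k (`|G k j| + 1) ^+ 2.
Proof.
move=> coerA e_range [symS ricS _].
apply: le_trans (sqr_le_sum_sqr (fun k => S k j) i) _.
apply: le_trans (riccati_col_sqr_le coerA symS ricS j) _.
by rewrite ler_wpM2l ?sqr_ge0 // sum_sqr_col_add_scalar_le.
Qed.

Lemma riccati_solution_lyapmx_unitmx A H : posdefmx A -> lyapmx H \in unitmx ->
  exists S, riccati_solution A H S.
Proof.
move=> posA Lu; have [/symmetricmxP symA _] := posA.
have sym2A : (2%:R *: A)^T = 2%:R *: A by rewrite linearZ /= symA.
have [P symP lyapP] := lyapunov_sym_solution Lu sym2A.
have Pu : P \in unitmx.
  by apply: lyapunov_posdef_unitmx symP lyapP; apply: posdefmxZ; rewrite ?ltr0n.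
exists (invmx P); split; first by rewrite trmx_inv symP.
  exact: riccati_invmx.
exact: mxtrace_riccati_invmx.
Qed.

Lemma riccati_solution_perturbed A G (delta : R) : posdefmx A -> 0 < delta ->
  exists2 e, 0 < e <= delta & exists S, riccati_solution A (G + e%:M) S.
Proof.
move=> posA delta_gt0.
have [e /andP[e_gt0 e_le] Lu] := unitmx_add_scalar_small (lyapmx G) delta_gt0.
exists (e / 2%:R).
  rewrite divr_gt0 ?ltr0n //= ler_pdivrMr ?ltr0n //; apply: le_trans e_le _.
  by rewrite ler_peMr ?(ltW delta_gt0) // ler1n.
apply: (riccati_solution_lyapmx_unitmx posA).
by rewrite lyapmx_add_scalar -[_ *+ 2]mulr_natr divfK ?pnatr_eq0.
Qed.

End PositiveDefinite.

Section Subsequences.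
Variable R : realType.

Lemma increasing_seq_cvgny (g : nat -> nat) : increasing_seq g -> g @ \oo --> \oo.
Proof.
move=> g_incr; have le_g k : (k <= g k)%N.
  elim: k => [//|k IHk]; apply: leq_ltn_trans IHk _.
  by rewrite ltnNge -leEnat g_incr ltnn.
apply/cvgnyPge => M; near=> k; apply: leq_trans (le_g k).
by near: k; exact: nbhs_infty_ge.
Unshelve. all: end_near. Qed.

Lemma bolzano_weierstrass_fin (I : finType) (u : I -> nat -> R) :
  (forall i, bounded_fun (u i)) ->
  exists2 phi : nat -> nat, increasing_seq phi & forall i, cvgn (u i \o phi).
Proof.
move=> u_bnd; suff [phi phi_incr phi_cvg] : exists2 phi : nat -> nat,
    increasing_seq phi & forall i, i \in enum I -> cvgn (u i \o phi).
  by exists phi => // i; apply: phi_cvg; rewrite mem_enum.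
elim: (enum I) => [|i s [phi phi_incr phi_cvg]]; first by exists id.
have : bounded_fun (u i \o phi).
  move: (u_bnd i); rewrite /bounded_near; apply: filterS => M uM k _; exact: uM.
case/bolzano_weierstrass => g g_incr g_cvg; exists (phi \o g).
  by move=> m n /=; rewrite phi_incr; exact: g_incr.
move=> j; rewrite inE => /predU1P[->//|/phi_cvg/cvg_ex[l ul]].
by apply/cvg_ex; exists l; exact: cvg_comp (increasing_seq_cvgny g_incr) ul.
Qed.

End Subsequences.

Section EntrywiseConvergence.
Variable R : realType.

Definition mx_cvg m n (u : nat -> 'M[R]_(m, n)) (L : 'M[R]_(m, n)) :=
  forall i j, (fun k => u k i j) @ \oo --> L i j.

Lemma mx_cvg_cst m n (L : 'M[R]_(m, n)) : mx_cvg (fun=> L) L.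
Proof. by move=> i j; exact: cvg_cst. Qed.

Lemma mx_cvgD m n (u v : nat -> 'M[R]_(m, n)) L M :
  mx_cvg u L -> mx_cvg v M -> mx_cvg (fun k => u k + v k) (L + M).
Proof.
move=> uL vM i j; rewrite mxE; under eq_cvg do rewrite mxE.
exact: cvgD (uL i j) (vM i j).
Qed.

Lemma mx_cvgZ m n (a : nat -> R) (u : nat -> 'M[R]_(m, n)) (c : R) L :
  a @ \oo --> c -> mx_cvg u L -> mx_cvg (fun k => a k *: u k) (c *: L).
Proof.
move=> ac uL i j; rewrite mxE; under eq_cvg do rewrite mxE.
exact: cvgM ac (uL i j).
Qed.

Lemma mx_cvgM m n p (u : nat -> 'M[R]_(m, n)) (v : nat -> 'M[R]_(n, p)) L M :
  mx_cvg u L -> mx_cvg v M -> mx_cvg (fun k => u k *m v k) (L *m M).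
Proof.
move=> uL vM i j; rewrite mxE; under eq_cvg do rewrite mxE.
by apply: cvg_big => [|l _]; [exact: add_continuous | exact: cvgM].
Qed.

Lemma mx_cvg_trace n (u : nat -> 'M[R]_n) L :
  mx_cvg u L -> (fun k => \tr (u k)) @ \oo --> \tr L.
Proof. by move=> uL; apply: cvg_big => [|i _]; [exact: add_continuous | exact: uL]. Qed.

Lemma mx_cvg_unique m n (u : nat -> 'M[R]_(m, n)) L M :
  mx_cvg u L -> mx_cvg u M -> L = M.
Proof. by move=> uL uM; apply/matrixP => i j; exact: cvg_unique (uL i j) (uM i j). Qed.

End EntrywiseConvergence.

Arguments mx_cvg_cst {R m n} L.

Section RiccatiLimit.
Variables (R : realType) (n : nat) (A G : 'M[R]_n).

Lemma riccati_solution_limit (e : nat -> R) (S_ : nat -> 'M[R]_n) S :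
  e @ \oo --> 0 -> mx_cvg S_ S ->
  (forall k, riccati_solution A (G + (e k)%:M) (S_ k)) -> riccati_solution A G S.
Proof.
move=> e_cvg S_cvg solS_; have symS_ k : (S_ k)^T = S_ k by case: (solS_ k).
have lyap_shift k : S_ k *m (G + (e k)%:M) + (G + (e k)%:M)^T *m S_ k =
    S_ k *m G + G^T *m S_ k + (e k *+ 2) *: S_ k.
  rewrite [(_ + _)^T]raddfD /= tr_scalar_mx mulmxDr mulmxDl mul_mx_scalar mul_scalar_mx.
  by rewrite addrACA -scalerDl -mulr2n.
split.
- apply: (mx_cvg_unique _ S_cvg) => i j; rewrite mxE.
  by under eq_cvg => k do rewrite -[S_ k](symS_ k) mxE; exact: S_cvg.
- have ricS_ k : S_ k *m G + G^T *m S_ k + (e k *+ 2) *: S_ k =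
      2%:R *: (S_ k *m A *m S_ k).
    by rewrite -lyap_shift; case: (solS_ k).
  have lim1 : mx_cvg (fun k => S_ k *m G + G^T *m S_ k + (e k *+ 2) *: S_ k)
                     (S *m G + G^T *m S).
    rewrite -[X in mx_cvg _ X]addr0 -(scale0r S) -(mul0rn _ 2).
    apply: mx_cvgD (mx_cvgZ (cvgMn e_cvg) S_cvg).
    exact: mx_cvgD (mx_cvgM S_cvg (mx_cvg_cst G)) (mx_cvgM (mx_cvg_cst G^T) S_cvg).
  apply: (mx_cvg_unique lim1); rewrite (funext ricS_).
  exact: mx_cvgZ (cvg_cst _) (mx_cvgM (mx_cvgM S_cvg (mx_cvg_cst A)) S_cvg).
- have lim1 := mx_cvg_trace (mx_cvgM (mx_cvg_cst A) S_cvg).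
  have lim2 : (fun k => \tr G + e k *+ n) @ \oo --> \tr G + 0 *+ n.
    exact: cvgD (cvg_cst _) (cvgMn e_cvg).
  rewrite mul0rn addr0 in lim2.
  have trS_ k : \tr (A *m S_ k) = \tr G + e k *+ n.
    by case: (solS_ k) => _ _ ->; rewrite mxtraceD mxtrace_scalar.
  by rewrite (funext trS_) in lim1; exact: cvg_unique lim1 lim2.
Qed.

End RiccatiLimit.

Lemma bounded_fun_sqr_le (R : realType) (u : nat -> R) (c : R) :
  (forall k, u k ^+ 2 <= c) -> bounded_fun u.
Proof.
move=> uc; rewrite /bounded_near; near=> M => k _ /=.
have : `|u k| <= 1 + c.
  have := uc k; rewrite -real_normK ?num_real //.
  by have := normr_ge0 (u k); nra.
by move/le_trans; apply; near: M; apply: nbhs_pinfty_ge; rewrite num_real.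
Unshelve. all: end_near. Qed.

Theorem theorem4p9 (R : realType) (d : nat) (hd : (2 <= d)%N)
  (A G : 'M[R]_d) (hA : posdefmx A) :
  exists S : 'M[R]_d,
    S \is symmetricmx /\
    S *m G + G^T *m S = 2%:R *: (S *m A *m S) /\
    \tr (G - A *m S) = 0.
Proof.
have [b coerA] := posdefmx_coercive hA.
have approx k : exists eS : R * 'M[R]_d,
    0 < eS.1 <= k.+1%:R^-1 /\ riccati_solution A (G + eS.1%:M) eS.2.
  have [|e e_range [S solS]] := riccati_solution_perturbed G hA (_ : 0 < k.+1%:R^-1).
    by rewrite invr_gt0 ltr0Sn.
  by exists (e, S).
have [eS eS_spec] := choice approx; pose e k := (eS k).1; pose S_ k := (eS k).2.
have S_bnd (ij : 'I_d * 'I_d) : bounded_fun (fun k => S_ k ij.1 ij.2).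
  apply: bounded_fun_sqr_le => k; have [/andP[e_gt0 e_le] solS] := eS_spec k.
  apply: riccati_entry_sqr_le coerA _ solS; rewrite ltW //=.
  by apply: le_trans e_le _; rewrite invr_le1 ?ler1n ?unitfE ?pnatr_eq0 ?ltr0Sn.
have [phi phi_incr S_cvg] := bolzano_weierstrass_fin S_bnd.
pose S := \matrix_(i, j) limn (fun k => S_ (phi k) i j).
have e_cvg : e @ \oo --> 0.
  apply: (@squeeze_cvgr _ _ _ _ (fun=> 0) harmonic); last exact: cvg_harmonic.
    by near=> k; have [/andP[/ltW -> ->] _] := eS_spec k.
  exact: cvg_cst.
have [symS ricS trS] : riccati_solution A G S.
  apply: (@riccati_solution_limit _ _ A G (e \o phi) (S_ \o phi)).
  - exact: cvg_comp (increasing_seq_cvgny phi_incr) e_cvg.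
  - by move=> i j; rewrite mxE; exact: (S_cvg (i, j)).
  - by move=> k; have [_ solS] := eS_spec (phi k).
exists S; split; first exact/symmetricmxP.
by split=> //; rewrite raddfB /= trS subrr.
Unshelve. all: end_near. Qed.
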